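(* Let $\sigma$ be any one of the DF-QuAD, Quadratic Energy (QE) or Restricted Euler-based (REB) gradual semantics. Then for every acyclic QBAF $\mathcal{Q}=\langle \mathcal{A},\mathcal{R}^-,\mathcal{R}^+,\tau\rangle$, every $\alpha,\beta\in\mathcal{A}$ with $\alpha\neq\beta$ and $\mathcal{R}(\beta)=\{(\beta,\alpha)\}$, and every $\tau':\mathcal{A}\to[0,1]$: (1) if $(\beta,\alpha)\in\mathcal{R}^-$, then $\sigma(\alpha)\le\sigma_{\mathcal{R}\setminus\{(\beta,\alpha)\}}(\alpha)$; (2) if $(\beta,\alpha)\in\mathcal{R}^+$, then $\sigma(\alpha)\ge\sigma_{\mathcal{R}\setminus\{(\beta,\alpha)\}}(\alpha)$; (3) if $(\beta,\alpha)\in\mathcal{R}^-$, $\tau(\beta)\le\tau'(\beta)$ and $\tau(\gamma)=\tau'(\gamma)$ for all $\gamma\in\mathcal{A}\setminus\{\beta\}$, then $\sigma(\alpha)\ge\sigma_{\tau'}(\alpha)$; (4) if $(\beta,\alpha)\in\mathcal{R}^+$, $\tau(\beta)\le\tau'(\beta)$ and $\tau(\gamma)=\tau'(\gamma)$ for all $\gamma\in\mathcal{A}\setminus\{\beta\}$, then $\sigma(\alpha)\le\sigma_{\tau'}(\alpha)$. That is, DF-QuAD, QE and REB satisfy monotonicity on acyclic QBAFs.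
   Context: A QBAF is a quadruple $\mathcal{Q}=\langle\mathcal{A},\mathcal{R}^-,\mathcal{R}^+,\tau\rangle$ with $\mathcal{A}$ a finite set of arguments, $\mathcal{R}^-,\mathcal{R}^+\subseteq\mathcal{A}\times\mathcal{A}$ disjoint attack and support relations, and $\tau:\mathcal{A}\to[0,1]$ a base score function. Write $\mathcal{R}=\mathcal{R}^-\cup\mathcal{R}^+$ and $\mathcal{R}(\beta)=\{(\beta,\gamma)\in\mathcal{R}:\gamma\in\mathcal{A}\}$ for the outgoing edges of $\beta$. A QBAF is acyclic if the directed graph $(\mathcal{A},\mathcal{R})$ has no cycle. For $\mathcal{S}\subseteq\mathcal{R}$, $\mathcal{Q}^{|\mathcal{S}}=\langle\mathcal{A},\mathcal{R}^-\cap\mathcal{S},\mathcal{R}^+\cap\mathcal{S},\tau\rangle$ and $\sigma_{\mathcal{S}}(\alpha)$ is the strength of $\alpha$ in $\mathcal{Q}^{|\mathcal{S}}$; for $\tau':\mathcal{A}\to[0,1]$, $\mathcal{Q}^{|\tau'}=\langle\mathcal{A},\mathcal{R}^-,\mathcal{R}^+,\tau'\rangle$ and $\sigma_{\tau'}(\alpha)$ is the strength of $\alpha$ in $\mathcal{Q}^{|\tau'}$; $\sigma(\alpha)$ is the strength in $\mathcal{Q}$. On an acyclic QBAF the three semantics are defined recursively (following a topological order) as follows. DF-QuAD: with $v_{att}=1-\prod_{(\beta,\alpha)\in\mathcal{R}^-}(1-\sigma(\beta))$ and $v_{sup}=1-\prod_{(\beta,\alpha)\in\mathcal{R}^+}(1-\sigma(\beta))$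 (empty products equal $1$), $\sigma(\alpha)=\tau(\alpha)-\tau(\alpha)(v_{att}-v_{sup})$ if $v_{att}\ge v_{sup}$ and $\sigma(\alpha)=\tau(\alpha)+(1-\tau(\alpha))(v_{sup}-v_{att})$ otherwise. QE: with $E_\alpha=\sum_{(\beta,\alpha)\in\mathcal{R}^+}\sigma(\beta)-\sum_{(\beta,\alpha)\in\mathcal{R}^-}\sigma(\beta)$, $\sigma(\alpha)=\tau(\alpha)-\tau(\alpha)\frac{E_\alpha^2}{1+E_\alpha^2}$ if $E_\alpha\le 0$ and $\sigma(\alpha)=\tau(\alpha)+(1-\tau(\alpha))\frac{E_\alpha^2}{1+E_\alpha^2}$ if $E_\alpha>0$. REB: with the same $E_\alpha$, $\sigma(\alpha)=1-\frac{1-\tau(\alpha)^2}{1+\tau(\alpha)e^{E_\alpha}}$. *)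

From HB Require Import structures.
From mathcomp Require Import all_boot all_order all_algebra.
From mathcomp Require Import reals sequences exp.
Set Implicit Arguments. Unset Strict Implicit. Unset Printing Implicit Defensive.
Import Order.TTheory GRing.Theory Num.Theory.
Local Open Scope ring_scope.

Inductive semantics := DFQuAD | QE | REB.

Section QBAF.
Variables (R : realType) (A : finType).

(* A QBAF over the finite argument set A is given by an attack relation
   [att], a support relation [sup] (both boolean relations on A, [att b a]
   meaning (b,a) in R^-) and a base score [tau]. *)

Definition disjoint_rels (att sup : rel A) : Prop :=
  forall x y, ~~ (att x y && sup x y).

Definition unit_valued (tau : A -> R) : Prop :=
  forall x, 0 <= tau x <= 1.

Definition edges (att sup : rel A) : rel A := fun x y => att x y || sup x y.

Definition acyclic (att sup : rel A) : Prop :=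
  forall x y, edges att sup x y -> ~~ connect (edges att sup) y x.

Definition update (sem : semantics) (att sup : rel A) (tau : A -> R)
  (s : A -> R) (a : A) : R :=
  match sem with
  | DFQuAD =>
      let vatt := 1 - \prod_(b | att b a) (1 - s b) in
      let vsup := 1 - \prod_(b | sup b a) (1 - s b) in
      if vsup <= vatt then tau a - tau a * (vatt - vsup)
      else tau a + (1 - tau a) * (vsup - vatt)
  | QE =>
      let E := \sum_(b | sup b a) s b - \sum_(b | att b a) s b in
      if E <= 0 then tau a - tau a * (E ^+ 2 / (1 + E ^+ 2))
      else tau a + (1 - tau a) * (E ^+ 2 / (1 + E ^+ 2))
  | REB =>
      let E := \sum_(b | sup b a) s b - \sum_(b | att b a) s b in
      1 - (1 - tau a ^+ 2) / (1 + tau a * expR E)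
  end.

(* Strength on an acyclic QBAF: the recursive definition along a
   topological order is realised by iterating the update #|A| times
   (every argument has depth < #|A| in an acyclic graph, so the values are
   then those of the recursive definition). *)
Definition strength (sem : semantics) (att sup : rel A) (tau : A -> R) : A -> R :=
  iter #|A| (fun s a => update sem att sup tau s a) tau.

Definition remove_edge (r : rel A) (b a : A) : rel A :=
  fun x y => r x y && ((x, y) != (b, a)).

End QBAF.

From HB Require Import structures.
From mathcomp Require Import all_boot all_order all_algebra.
From mathcomp Require Import reals sequences exp.
From mathcomp Require Import ring lra.
Set Implicit Arguments. Unset Strict Implicit. Unset Printing Implicit Defensive.
Import Order.TTheory GRing.Theory Num.Theory.
Local Open Scope ring_scope.

(* Each semantics computes the strength of [a] as [influence sem (tau a) E],
   where the aggregate [E] is nondecreasing in the strengths of the supporters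
   of [a] and nonincreasing in those of its attackers, and [influence] is
   nondecreasing both in the base score and in [E]. Removing the edge
   (beta, alpha) amounts to giving beta strength 0 in the aggregate of alpha.
   Since beta only points to alpha and the QBAF is acyclic, neither
   perturbation changes the strength of an argument not reachable from alpha,
   except that of beta itself, which can only grow with tau beta; all parents
   of alpha are among these arguments, so the comparison at alpha reduces to
   the monotonicity of one update step. *)

Section Influence.
Variable R : realType.
Implicit Types t E : R.

Definition dfquad_influence t E :=
  if E <= 0 then t + t * E else t + (1 - t) * E.

Definition qe_influence t E :=
  let h := E ^+ 2 / (1 + E ^+ 2) in
  if E <= 0 then t - t * h else t + (1 - t) * h.

Definition reb_influence t E := 1 - (1 - t ^+ 2) / (1 + t * expR E).

Lemma ler_div1D (x y : R) : 0 <= x -> x <= y -> x / (1 + x) <= y / (1 + y).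
Proof.
move=> x0 xy; have y0 : 0 < 1 + y by lra.
by rewrite ler_pdivlMr // mulrAC ler_pdivrMr; nra.
Qed.

Lemma sqr_div1D_in01 E : 0 <= E ^+ 2 / (1 + E ^+ 2) <= 1.
Proof.
have E2_ge0 : 0 <= E ^+ 2 by rewrite sqr_ge0.
by rewrite divr_ge0 ?ler_pdivrMr //=; lra.
Qed.

Lemma dfquad_influence_mono t E1 E2 : 0 <= t <= 1 -> E1 <= E2 ->
  dfquad_influence t E1 <= dfquad_influence t E2.
Proof. by move=> /andP[t0 t1] E12; rewrite /dfquad_influence; do 2 case: ifP; nra. Qed.

Lemma dfquad_influence_mono_base t1 t2 E : -1 <= E <= 1 -> t1 <= t2 ->
  dfquad_influence t1 E <= dfquad_influence t2 E.
Proof. by move=> /andP[E0 E1] t12; rewrite /dfquad_influence; case: ifP; nra. Qed.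

Lemma dfquad_influence_in01 t E : 0 <= t <= 1 -> -1 <= E <= 1 ->
  0 <= dfquad_influence t E <= 1.
Proof.
move=> /andP[t0 t1] /andP[E0 E1]; rewrite /dfquad_influence.
by case: (leP E 0) => EP; apply/andP; split; nra.
Qed.

Lemma qe_influence_mono t E1 E2 : 0 <= t <= 1 -> E1 <= E2 ->
  qe_influence t E1 <= qe_influence t E2.
Proof.
move=> /andP[t0 t1] E12; rewrite /qe_influence.
have [h1_ge0 h1_le1] := andP (sqr_div1D_in01 E1).
have [h2_ge0 h2_le1] := andP (sqr_div1D_in01 E2).
case: (leP E1 0) => E1P; case: (leP E2 0) => E2P.
- suff : E2 ^+ 2 / (1 + E2 ^+ 2) <= E1 ^+ 2 / (1 + E1 ^+ 2) by nra.
  by apply: ler_div1D; nra.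
- nra.
- lra.
- suff : E1 ^+ 2 / (1 + E1 ^+ 2) <= E2 ^+ 2 / (1 + E2 ^+ 2) by nra.
  by apply: ler_div1D; nra.
Qed.

Lemma qe_influence_mono_base t1 t2 E : t1 <= t2 ->
  qe_influence t1 E <= qe_influence t2 E.
Proof.
have [h_ge0 h_le1] := andP (sqr_div1D_in01 E).
by move=> t12; rewrite /qe_influence; case: ifP; nra.
Qed.

Lemma qe_influence_in01 t E : 0 <= t <= 1 -> 0 <= qe_influence t E <= 1.
Proof.
have [h_ge0 h_le1] := andP (sqr_div1D_in01 E).
by move=> /andP[t0 t1]; rewrite /qe_influence; case: ifP; rewrite /= ?andbT; nra.
Qed.

Lemma reb_influence_le t1 t2 E1 E2 : 0 <= t1 <= 1 -> 0 <= t2 <= 1 ->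
  t1 <= t2 -> t1 * expR E1 <= t2 * expR E2 -> reb_influence t1 E1 <= reb_influence t2 E2.
Proof.
move=> /andP[t1_ge0 t1_le1] /andP[t2_ge0 t2_le1] t12 den12.
have e1 := expR_gt0 E1; have e2 := expR_gt0 E2.
have den1 : 0 < 1 + t1 * expR E1 by nra.
have den2 : 0 < 1 + t2 * expR E2 by nra.
rewrite lerD2l lerN2 ler_pdivlMr // mulrAC ler_pdivrMr //.
by apply: ler_pM; nra.
Qed.

Lemma reb_influence_in01 t E : 0 <= t <= 1 -> 0 <= reb_influence t E <= 1.
Proof.
move=> /andP[t0 t1]; have e := expR_gt0 E.
have den : 0 < 1 + t * expR E by nra.
have frac_ge0 : 0 <= (1 - t ^+ 2) / (1 + t * expR E) by rewrite divr_ge0 //; nra.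
have frac_le1 : (1 - t ^+ 2) / (1 + t * expR E) <= 1 by rewrite ler_pdivrMr //; nra.
by rewrite /reb_influence; apply/andP; split; lra.
Qed.

End Influence.

Section Update.
Variables (R : realType) (A : finType).
Implicit Types (sem : semantics) (att sup : rel A) (tau s : A -> R) (a : A).

(* For DF-QuAD this is v_sup - v_att, for QE and REB the energy E_a. *)
Definition aggregate sem att sup s a : R :=
  match sem with
  | DFQuAD => \prod_(b | att b a) (1 - s b) - \prod_(b | sup b a) (1 - s b)
  | QE | REB => \sum_(b | sup b a) s b - \sum_(b | att b a) s b
  end.

Definition influence sem : R -> R -> R :=
  match sem with
  | DFQuAD => @dfquad_influence R
  | QE => @qe_influence R
  | REB => @reb_influence R
  end.

Lemma updateE sem att sup tau s a :
  update sem att sup tau s a = influence sem (tau a) (aggregate sem att sup s a).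
Proof.
case: sem => //=; rewrite /dfquad_influence lerD2l lerN2 subr_le0.
by case: ifP => _; ring.
Qed.

Lemma eq_aggregate sem att1 sup1 att2 sup2 s1 s2 a :
  att1^~ a =1 att2^~ a -> sup1^~ a =1 sup2^~ a ->
  (forall b, edges att1 sup1 b a -> s1 b = s2 b) ->
  aggregate sem att1 sup1 s1 a = aggregate sem att2 sup2 s2 a.
Proof.
move=> eatt esup es; case: sem => /=; congr (_ - _);
  by apply: eq_big => // b hb; rewrite es // /edges hb ?orbT.
Qed.

Lemma big_remove_edge (T : Type) (idx : T) (op : Monoid.law idx) (r : rel A) b0 a
    (F : A -> T) :
  \big[op/idx]_(b | remove_edge r b0 a b a) F b =
  \big[op/idx]_(b | r b a) (if b == b0 then idx else F b).
Proof.
rewrite (eq_bigl (fun b => r b a && (b != b0))) ?big_mkcondr.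
  by apply: eq_bigr => b _; case: eqP.
by move=> b; rewrite /remove_edge xpair_eqE eqxx andbT.
Qed.

Lemma aggregate_remove_edge sem att sup s b0 a :
  aggregate sem (remove_edge att b0 a) (remove_edge sup b0 a) s a =
  aggregate sem att sup [eta s with b0 |-> 0] a.
Proof.
by case: sem => /=; rewrite !big_remove_edge; congr (_ - _);
  apply: eq_bigr => b _ /=; case: eqP; rewrite ?subr0.
Qed.

Lemma aggregate_homo sem att sup s1 s2 a :
  unit_valued s1 -> unit_valued s2 ->
  (forall b, att b a -> s2 b <= s1 b) -> (forall b, sup b a -> s1 b <= s2 b) ->
  aggregate sem att sup s1 a <= aggregate sem att sup s2 a.
Proof.
move=> s1_01 s2_01 le_att le_sup; case: sem => /=; apply: lerB; try exact: ler_sum.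
- by apply: ler_prod => b /le_att; have := s1_01 b; lra.
- by apply: ler_prod => b /le_sup; have := s2_01 b; lra.
Qed.

Lemma aggregate_DFQuAD_bound att sup s a : unit_valued s ->
  -1 <= aggregate DFQuAD att sup s a <= 1.
Proof.
move=> s01; have prod01 (P : pred A) : 0 <= \prod_(b | P b) (1 - s b) <= 1.
  by rewrite prodr_ge0 ?prodr_ile1 // => b _; have := s01 b; lra.
have := prod01 (att^~ a); have := prod01 (sup^~ a); rewrite /=; lra.
Qed.

Lemma eq_update sem att1 sup1 att2 sup2 tau1 tau2 s1 s2 a :
  att1^~ a =1 att2^~ a -> sup1^~ a =1 sup2^~ a -> tau1 a = tau2 a ->
  (forall b, edges att1 sup1 b a -> s1 b = s2 b) ->
  update sem att1 sup1 tau1 s1 a = update sem att2 sup2 tau2 s2 a.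
Proof.
by move=> eatt esup etau es; rewrite !updateE etau (eq_aggregate _ eatt esup es).
Qed.

Lemma update_remove_edge sem att sup tau s b0 a :
  update sem (remove_edge att b0 a) (remove_edge sup b0 a) tau s a =
  update sem att sup tau [eta s with b0 |-> 0] a.
Proof. by rewrite !updateE aggregate_remove_edge. Qed.

Lemma update_in01 sem att sup tau s a : unit_valued s -> 0 <= tau a <= 1 ->
  0 <= update sem att sup tau s a <= 1.
Proof.
move=> s01 tau01; rewrite updateE; case: sem => /=.
- by apply: dfquad_influence_in01 => //; apply: aggregate_DFQuAD_bound.
- exact: qe_influence_in01.
- exact: reb_influence_in01.
Qed.

Lemma update_mono_base sem att sup tau1 tau2 s a : unit_valued s ->
  0 <= tau1 a <= 1 -> 0 <= tau2 a <= 1 -> tau1 a <= tau2 a ->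
  update sem att sup tau1 s a <= update sem att sup tau2 s a.
Proof.
move=> s01 tau1_01 tau2_01 tau12; rewrite !updateE; case: sem => /=.
- by apply: dfquad_influence_mono_base => //; apply: aggregate_DFQuAD_bound.
- exact: qe_influence_mono_base.
- by apply: reb_influence_le => //; rewrite ler_wpM2r // ltW ?expR_gt0.
Qed.

Lemma update_homo sem att sup tau s1 s2 a :
  unit_valued s1 -> unit_valued s2 -> 0 <= tau a <= 1 ->
  (forall b, att b a -> s2 b <= s1 b) -> (forall b, sup b a -> s1 b <= s2 b) ->
  update sem att sup tau s1 a <= update sem att sup tau s2 a.
Proof.
move=> s1_01 s2_01 tau01 le_att le_sup; rewrite !updateE.
have le_agg := aggregate_homo sem s1_01 s2_01 le_att le_sup.
case: sem le_agg => /= le_agg.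
- exact: dfquad_influence_mono.
- exact: qe_influence_mono.
- have [tau_ge0 _] := andP tau01.
  by apply: reb_influence_le => //; rewrite ler_wpM2l // ler_expR.
Qed.

Lemma unit_valued_with0 s c : unit_valued s -> unit_valued [eta s with c |-> 0].
Proof. by move=> s01 x /=; case: eqP; rewrite ?lexx ?ler01. Qed.

Section SingleEdge.
Variables (sem : semantics) (att sup : rel A) (tau : A -> R) (s1 s2 : A -> R) (a c : A).
Hypotheses (s1_01 : unit_valued s1) (s2_01 : unit_valued s2) (tau01 : 0 <= tau a <= 1).
Hypotheses (s12 : s1 c <= s2 c)
  (eq_s12 : forall b, edges att sup b a -> b != c -> s1 b = s2 b).

Lemma update_anti_attacker : att c a -> ~~ sup c a ->
  update sem att sup tau s2 a <= update sem att sup tau s1 a.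
Proof.
move=> att_c sup_c; apply: update_homo => // b edge_b.
  by case: (eqVneq b c) => [-> // | b_c]; rewrite eq_s12 // /edges edge_b.
rewrite eq_s12 // /edges ?edge_b ?orbT //.
by apply: contraNneq sup_c => <-.
Qed.

Lemma update_mono_supporter : sup c a -> ~~ att c a ->
  update sem att sup tau s1 a <= update sem att sup tau s2 a.
Proof.
move=> sup_c att_c; apply: update_homo => // b edge_b.
  rewrite eq_s12 // /edges ?edge_b //.
  by apply: contraNneq att_c => <-.
by case: (eqVneq b c) => [-> // | b_c]; rewrite eq_s12 // /edges edge_b ?orbT.
Qed.

End SingleEdge.

End Update.

Section Iterates.
Variables (R : realType) (A : finType) (sem : semantics).
Implicit Types (att sup : rel A) (tau : A -> R).

Lemma iter_update_in01 att sup tau : unit_valued tau ->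
  forall k, unit_valued (iter k (update sem att sup tau) tau).
Proof. by move=> tau01; elim=> [|k IH] x //=; apply: update_in01. Qed.

Lemma eq_in_iter_update att1 sup1 att2 sup2 tau1 tau2 (N : pred A) :
  (forall x b, x \in N -> edges att1 sup1 b x -> b \in N) ->
  (forall x, x \in N -> att1^~ x =1 att2^~ x) ->
  (forall x, x \in N -> sup1^~ x =1 sup2^~ x) ->
  {in N, tau1 =1 tau2} ->
  forall k, {in N, iter k (update sem att1 sup1 tau1) tau1 =1
                   iter k (update sem att2 sup2 tau2) tau2}.
Proof.
move=> N_closed eatt esup etau; elim=> [|k IH] x xN /=; first exact: etau.
apply: eq_update (eatt x xN) (esup x xN) (etau x xN) _ => b.
by move/(N_closed x b xN); apply: IH.
Qed.

Lemma iter_update_mono_base att sup tau1 tau2 a :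
  unit_valued tau1 -> unit_valued tau2 -> tau1 a <= tau2 a ->
  (forall k b, edges att sup b a ->
     iter k (update sem att sup tau1) tau1 b = iter k (update sem att sup tau2) tau2 b) ->
  forall k, iter k (update sem att sup tau1) tau1 a <= iter k (update sem att sup tau2) tau2 a.
Proof.
move=> tau1_01 tau2_01 tau12 eq_parents [|k] //=.
set S1 := iter k _ tau1; set S2 := iter k _ tau2.
have -> : update sem att sup tau1 S1 a = update sem att sup tau1 S2 a.
  by apply: eq_update => // b; apply: eq_parents.
exact: update_mono_base (iter_update_in01 _ _ _ _) _ _ tau12.
Qed.

Lemma strength_update att sup tau a :
  strength sem att sup tau a =
  update sem att sup tau (iter #|A|.-1 (update sem att sup tau) tau) a.
Proof.
have : (0 < #|A|)%N by apply/card_gt0P; exists a.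
by rewrite /strength; case: #|A|.
Qed.

End Iterates.

Section Monotonicity.
Variables (R : realType) (A : finType) (sem : semantics).
Variables (att sup : rel A) (tau : A -> R) (alpha beta : A).
Hypotheses (Htau : unit_valued tau) (Hacyc : acyclic att sup) (Hab : alpha != beta).
Hypothesis Hout : forall g, edges att sup beta g = (g == alpha).

Local Notation iterate att sup tau k := (iter k (update sem att sup tau) tau%function).
Local Notation S := (iterate att sup tau #|A|.-1).

Definition unreached : pred A := [pred x | ~~ connect (edges att sup) alpha x].

Lemma unreached_closed x b : x \in unreached -> edges att sup b x -> b \in unreached.
Proof.
rewrite !inE => x_unr edge_bx; apply: contra x_unr => alpha_b.
exact: connect_trans alpha_b (connect1 edge_bx).
Qed.

Lemma parent_alpha_unreached b : edges att sup b alpha -> b \in unreached.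
Proof. exact: Hacyc. Qed.

Lemma beta_unreached : beta \in unreached.
Proof. by apply: parent_alpha_unreached; rewrite Hout. Qed.

Lemma unreached_neq_alpha x : x \in unreached -> x != alpha.
Proof. by rewrite inE; apply: contra => /eqP ->; apply: connect0. Qed.

Lemma eq_in_iter_remove_edge k :
  {in unreached, iterate (remove_edge att beta alpha) (remove_edge sup beta alpha) tau k
                 =1 iterate att sup tau k}.
Proof.
have removed x (r : rel A) : x \in unreached -> remove_edge r beta alpha ^~ x =1 r ^~ x.
  move=> x_unr b; rewrite /remove_edge xpair_eqE.
  by rewrite (negbTE (unreached_neq_alpha x_unr)) andbF andbT.
apply: eq_in_iter_update => [x b x_unr | x x_unr | x x_unr | //]; try exact: removed.
by rewrite /edges !removed //; apply: unreached_closed.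
Qed.

Lemma eq_parents_remove_edge b : edges att sup b alpha -> b != beta ->
  [eta iterate (remove_edge att beta alpha) (remove_edge sup beta alpha) tau #|A|.-1
     with beta |-> 0] b = S b.
Proof.
move=> edge_b b_beta /=; rewrite (negbTE b_beta).
by rewrite eq_in_iter_remove_edge // parent_alpha_unreached.
Qed.

Lemma strength_remove_attack : att beta alpha -> ~~ sup beta alpha ->
  strength sem att sup tau alpha <=
  strength sem (remove_edge att beta alpha) (remove_edge sup beta alpha) tau alpha.
Proof.
move=> att_ba sup_ba; rewrite !strength_update update_remove_edge.
apply: update_anti_attacker att_ba sup_ba => //.
- by apply/unit_valued_with0/iter_update_in01.
- exact: iter_update_in01.
- by rewrite /= eqxx; case/andP: (iter_update_in01 sem att sup Htau #|A|.-1 beta).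
- by move=> b edge_b b_beta; rewrite eq_parents_remove_edge.
Qed.

Lemma strength_remove_support : sup beta alpha -> ~~ att beta alpha ->
  strength sem (remove_edge att beta alpha) (remove_edge sup beta alpha) tau alpha <=
  strength sem att sup tau alpha.
Proof.
move=> sup_ba att_ba; rewrite !strength_update update_remove_edge.
apply: update_mono_supporter sup_ba att_ba => //.
- by apply/unit_valued_with0/iter_update_in01.
- exact: iter_update_in01.
- by rewrite /= eqxx; case/andP: (iter_update_in01 sem att sup Htau #|A|.-1 beta).
- by move=> b edge_b b_beta; rewrite eq_parents_remove_edge.
Qed.

Section BaseScore.
Variable tau' : A -> R.
Hypotheses (Htau' : unit_valued tau') (tau_le : tau beta <= tau' beta).
Hypothesis tau_eq : forall g, g != beta -> tau g = tau' g.

Local Notation S' := (iterate att sup tau' #|A|.-1).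

Lemma eq_in_iter_base_score k :
  {in [predD1 unreached & beta], iterate att sup tau k =1 iterate att sup tau' k}.
Proof.
apply: eq_in_iter_update => // [x b /andP[_ x_unr] edge_bx | x /andP[x_beta _]].
  apply/andP; split; last exact: unreached_closed x_unr edge_bx.
  by apply: contraTneq edge_bx => ->; rewrite Hout; apply: unreached_neq_alpha.
exact: tau_eq.
Qed.

Lemma iter_base_score_le k : iterate att sup tau k beta <= iterate att sup tau' k beta.
Proof.
apply: iter_update_mono_base => // {}k b edge_b; apply: eq_in_iter_base_score.
apply/andP; split; last exact: unreached_closed beta_unreached edge_b.
by apply: contraTneq edge_b => ->; rewrite Hout eq_sym.
Qed.

Lemma eq_parents_base_score b : edges att sup b alpha -> b != beta -> S b = S' b.
Proof.
move=> edge_b b_beta; apply: eq_in_iter_base_score.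
by apply/andP; split; last exact: parent_alpha_unreached.
Qed.

Lemma strength_base_score_attack : att beta alpha -> ~~ sup beta alpha ->
  strength sem att sup tau' alpha <= strength sem att sup tau alpha.
Proof.
move=> att_ba sup_ba; rewrite !strength_update.
have -> : update sem att sup tau' S' alpha = update sem att sup tau S' alpha.
  by apply: eq_update => //; rewrite tau_eq.
apply: update_anti_attacker att_ba sup_ba => //; try exact: iter_update_in01.
- exact: iter_base_score_le.
- exact: eq_parents_base_score.
Qed.

Lemma strength_base_score_support : sup beta alpha -> ~~ att beta alpha ->
  strength sem att sup tau alpha <= strength sem att sup tau' alpha.
Proof.
move=> sup_ba att_ba; rewrite !strength_update.
have -> : update sem att sup tau' S' alpha = update sem att sup tau S' alpha.
  by apply: eq_update => //; rewrite tau_eq.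
apply: update_mono_supporter sup_ba att_ba => //; try exact: iter_update_in01.
- exact: iter_base_score_le.
- exact: eq_parents_base_score.
Qed.

End BaseScore.

End Monotonicity.

Theorem proposition1 (sem : semantics) (R : realType) (A : finType)
  (att sup : rel A) (tau : A -> R)
  (Hdisj : disjoint_rels att sup) (Htau : unit_valued tau)
  (Hacyc : acyclic att sup)
  (alpha beta : A) (Hab : alpha != beta)
  (Hout : forall g : A, edges att sup beta g = (g == alpha))
  (tau' : A -> R) (Htau' : unit_valued tau') :
  (att beta alpha ->
     strength sem att sup tau alpha
     <= strength sem (remove_edge att beta alpha) (remove_edge sup beta alpha) tau alpha) /\
  (sup beta alpha ->
     strength sem (remove_edge att beta alpha) (remove_edge sup beta alpha) tau alpha
     <= strength sem att sup tau alpha) /\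
  (att beta alpha -> tau beta <= tau' beta ->
     (forall g : A, g != beta -> tau g = tau' g) ->
     strength sem att sup tau' alpha <= strength sem att sup tau alpha) /\
  (sup beta alpha -> tau beta <= tau' beta ->
     (forall g : A, g != beta -> tau g = tau' g) ->
     strength sem att sup tau alpha <= strength sem att sup tau' alpha).
Proof.
have attack_only : att beta alpha -> ~~ sup beta alpha.
  by move=> att_ba; have := Hdisj beta alpha; rewrite att_ba.
have support_only : sup beta alpha -> ~~ att beta alpha.
  by move=> sup_ba; have := Hdisj beta alpha; rewrite sup_ba andbT.
split; [|split; [|split]].
- by move=> att_ba; apply: strength_remove_attack (attack_only att_ba).
- by move=> sup_ba; apply: strength_remove_support (support_only sup_ba).
- by move=> att_ba tau_le tau_eq; apply: strength_base_score_attack (attack_only att_ba).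
- by move=> sup_ba tau_le tau_eq; apply: strength_base_score_support (support_only sup_ba).
Qed.
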